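(* The theory $SOA$ of second order arithmetic cannot eliminate imaginaries.
   Context: $SOA$ is second order arithmetic with full comprehension and with choice for all definable sets of reals indexed by natural numbers (the theory $\Sigma^{1}_{\infty}\text{-}AC_{0}$). A theory $T$ eliminates imaginaries if whenever $T$ proves that some formula $E(x,y)$ defines an equivalence relation, there is a formula $F$ such that $T$ proves that $F$ defines a function and that for all $x,y$, $xEy$ iff $F(x)=F(y)$ (one may work with single variables rather than tuples, since the theories considered code finite sequences). *)

From Stdlib Require Import Arith.

(* ---------- syntax (de Bruijn indices, one index space per sort) ---------- *)

Inductive term : Type :=
| tvar  : nat -> term
| tzero : term
| tsucc : term -> term
| tadd  : term -> term -> term
| tmul  : term -> term -> term.

(* formulas; set variables are the only set terms (fmem t X : t ∈ X_X) *)
Inductive form : Type :=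
| fbot  : form
| feq   : term -> term -> form
| flt   : term -> term -> form
| fmem  : term -> nat -> form
| fimp  : form -> form -> form
| fallN : form -> form      (* number quantifier, binds number index 0 *)
| fallS : form -> form.     (* set quantifier, binds set index 0 *)

Definition fneg (p : form) : form := fimp p fbot.
Definition for_ (p q : form) : form := fimp (fneg p) q.
Definition fand (p q : form) : form := fneg (fimp p (fneg q)).
Definition fiff (p q : form) : form := fand (fimp p q) (fimp q p).
Definition fexN (p : form) : form := fneg (fallN (fneg p)).
Definition fexS (p : form) : form := fneg (fallS (fneg p)).

Fixpoint tsubst (s : nat -> term) (t : term) : term :=
  match t with
  | tvar n => s n
  | tzero => tzero
  | tsucc u => tsucc (tsubst s u)
  | tadd u v => tadd (tsubst s u) (tsubst s v)
  | tmul u v => tmul (tsubst s u) (tsubst s v)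
  end.

Definition upN (s : nat -> term) : nat -> term :=
  fun n => match n with
           | 0 => tvar 0
           | S m => tsubst (fun k => tvar (S k)) (s m)
           end.

Definition upS (r : nat -> nat) : nat -> nat :=
  fun n => match n with 0 => 0 | S m => S (r m) end.

Fixpoint fsubst (s : nat -> term) (r : nat -> nat) (p : form) : form :=
  match p with
  | fbot => fbot
  | feq u v => feq (tsubst s u) (tsubst s v)
  | flt u v => flt (tsubst s u) (tsubst s v)
  | fmem u X => fmem (tsubst s u) (r X)
  | fimp a b => fimp (fsubst s r a) (fsubst s r b)
  | fallN a => fallN (fsubst (upN s) r a)
  | fallS a => fallS (fsubst s (upS r) a)
  end.

Definition liftN (p : form) : form := fsubst (fun k => tvar (S k)) (fun k => k) p.
Definition liftS (p : form) : form := fsubst tvar S p.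
Definition instN (t : term) (p : form) : form :=
  fsubst (fun n => match n with 0 => t | S m => tvar m end) (fun k => k) p.
Definition instS (Y : nat) (p : form) : form :=
  fsubst tvar (fun n => match n with 0 => Y | S m => m end) p.

Fixpoint tbound (n : nat) (t : term) : Prop :=
  match t with
  | tvar k => k < n
  | tzero => True
  | tsucc u => tbound n u
  | tadd u v | tmul u v => tbound n u /\ tbound n v
  end.

Fixpoint fbound (n m : nat) (p : form) : Prop :=
  match p with
  | fbot => True
  | feq u v | flt u v => tbound n u /\ tbound n v
  | fmem u X => tbound n u /\ X < m
  | fimp a b => fbound n m a /\ fbound n m b
  | fallN a => fbound (S n) m a
  | fallS a => fbound n (S m) a
  end.

(* (free variables of proved formulas are read universally; generalization) *)

Inductive Prov (T : form -> Prop) : form -> Prop :=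
| pr_ax   : forall p, T p -> Prov T p
| pr_K    : forall p q, Prov T (fimp p (fimp q p))
| pr_S    : forall p q c,
    Prov T (fimp (fimp p (fimp q c)) (fimp (fimp p q) (fimp p c)))
| pr_DN   : forall p, Prov T (fimp (fneg (fneg p)) p)
| pr_MP   : forall p q, Prov T (fimp p q) -> Prov T p -> Prov T q
| pr_instN : forall p t, Prov T (fimp (fallN p) (instN t p))
| pr_qimpN : forall p q, Prov T (fimp (fallN (fimp (liftN q) p)) (fimp q (fallN p)))
| pr_genN : forall p, Prov T p -> Prov T (fallN p)
| pr_instS : forall p Y, Prov T (fimp (fallS p) (instS Y p))
| pr_qimpS : forall p q, Prov T (fimp (fallS (fimp (liftS q) p)) (fimp q (fallS p)))
| pr_genS : forall p, Prov T p -> Prov T (fallS p)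
| pr_refl : forall t, Prov T (feq t t)
| pr_leib : forall p u v, Prov T (fimp (feq u v) (fimp (instN u p) (instN v p))).

Definition v0 := tvar 0.
Definition v1 := tvar 1.
Definition tpair (a b : term) : term := tadd (tmul (tadd a b) (tadd a b)) a.

Inductive SOA : form -> Prop :=
(* basic axioms (v1 = m, v0 = n) *)
| soa_succ0 : SOA (fallN (fneg (feq (tsucc v0) tzero)))
| soa_succinj : SOA (fallN (fallN (fimp (feq (tsucc v1) (tsucc v0)) (feq v1 v0))))
| soa_add0 : SOA (fallN (feq (tadd v0 tzero) v0))
| soa_addS : SOA (fallN (fallN (feq (tadd v1 (tsucc v0)) (tsucc (tadd v1 v0)))))
| soa_mul0 : SOA (fallN (feq (tmul v0 tzero) tzero))
| soa_mulS : SOA (fallN (fallN (feq (tmul v1 (tsucc v0)) (tadd (tmul v1 v0) v1))))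
| soa_lt0 : SOA (fallN (fneg (flt v0 tzero)))
| soa_ltS : SOA (fallN (fallN (fiff (flt v1 (tsucc v0)) (for_ (flt v1 v0) (feq v1 v0)))))
| soa_ind : SOA (fallS (fimp (fand (fmem tzero 0)
                                    (fallN (fimp (fmem v0 0) (fmem (tsucc v0) 0))))
                              (fallN (fmem v0 0))))
(* full comprehension: exists X forall n (n in X <-> phi(n)), X not free in phi *)
| soa_comp : forall p, SOA (fexS (fallN (fiff (fmem v0 0) (liftS p))))
(* Sigma^1_oo-AC_0:
   (forall n exists X phi(n,X)) ->
   exists Y forall n exists X ((forall m (m in X <-> (n,m) in Y)) /\ phi(n,X)),
   i.e. forall n phi(n,(Y)_n) *)
| soa_ac : forall p,
    SOA (fimp (fallN (fexS p))
              (fexS (fallN (fexS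
                 (fand (fallN (fiff (fmem v0 0) (fmem (tpair v1 v0) 1)))
                       (fsubst tvar (fun k => match k with 0 => 0 | S j => S (S j) end) p)))))).

(* P(a,b) for a binary formula P with free set variables 0 (first argument)
   and 1 (second argument), instantiated by set variables a, b *)
Definition app2 (P : form) (a b : nat) : form :=
  fsubst tvar (fun k => match k with 0 => a | 1 => b | S (S j) => j end) P.

(* extensional equality of set variables a, b (fallN binds no set index) *)
Definition seteq (a b : nat) : form := fallN (fiff (fmem v0 a) (fmem v0 b)).

Definition is_equiv_rel (E : form) : form :=
  fand (fallS (app2 E 0 0))
   (fand (fallS (fallS (fimp (app2 E 1 0) (app2 E 0 1))))
         (fallS (fallS (fallS (fimp (app2 E 2 1) (fimp (app2 E 1 0) (app2 E 2 0))))))).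

(* forall x exists! z F(x,z)  (uniqueness up to set equality) *)
Definition is_function (F : form) : form :=
  fallS (fexS (fand (app2 F 1 0) (fallS (fimp (app2 F 2 0) (seteq 0 1))))).

(* forall x y (E(x,y) <-> F(x) = F(y)) *)
Definition classifies (E F : form) : form :=
  fallS (fallS (fiff (app2 E 1 0) (fexS (fand (app2 F 2 0) (app2 F 1 0))))).

Definition eliminates_imaginaries (T : form -> Prop) : Prop :=
  forall E : form, fbound 0 2 E -> Prov T (is_equiv_rel E) ->
    exists F : form, fbound 0 2 F /\ Prov T (is_function F) /\ Prov T (classifies E F).

From Stdlib Require Import Arith Lia List Classical FunctionalExtensionality ClassicalEpsilon.
Import ListNotations.

(* Work with Cohen forcing over the standard model: conditions are finite binary
   sequences, names are arbitrary families [nat -> cond -> Prop], and every theorem of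
   SOA is forced (choice holds because witnesses picked at minimal conditions glue into
   a single name).  Let E be equality modulo finite sets, c the Cohen real and c' its
   complement; c E c' is not forced.  Suppose F were an SOA-definable map classifying E.
   Flipping finitely many bits is an automorphism of the forcing that moves c to an
   E-equivalent name, so whether a condition forces m ∈ F(c) does not depend on the
   condition; flipping all bits exchanges c and c', so the same answer holds for c'.
   Hence F(c) = F(c') is forced, and with it c E c'. *)

(** * Derivations in the Hilbert calculus *)

Lemma tsubst_id s t : (forall k, s k = tvar k) -> tsubst s t = t.
Proof. intros Hs. induction t; simpl; rewrite ?Hs, ?IHt, ?IHt1, ?IHt2; reflexivity. Qed.

Lemma upN_id s : (forall k, s k = tvar k) -> forall k, upN s k = tvar k.
Proof. intros Hs [|k]; simpl; [|rewrite Hs]; reflexivity. Qed.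

Lemma fsubst_id p : forall s r, (forall k, s k = tvar k) -> (forall k, r k = k) ->
  fsubst s r p = p.
Proof.
  induction p; intros s r Hs Hr; simpl; rewrite ?(tsubst_id s), ?Hr by exact Hs.
  all: try reflexivity.
  - rewrite IHp1, IHp2 by assumption. reflexivity.
  - rewrite IHp; [reflexivity|apply upN_id, Hs|exact Hr].
  - rewrite IHp; [reflexivity|exact Hs|intros [|k]; simpl; auto].
Qed.

Lemma fsubst_ren_ren p : forall s r r', (forall k, s k = tvar k) ->
  fsubst s r (fsubst s r' p) = fsubst s (fun k => r (r' k)) p.
Proof.
  induction p; intros s r r' Hs; simpl; rewrite ?(tsubst_id s (tsubst s _)) by exact Hs.
  all: try reflexivity.
  - rewrite IHp1, IHp2 by assumption. reflexivity.
  - rewrite IHp by (apply upN_id, Hs). reflexivity.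
  - rewrite IHp by assumption. f_equal. f_equal.
    apply functional_extensionality. intros [|k]; reflexivity.
Qed.

Lemma instS_0_lift p : instS 0 (fsubst tvar (upS S) p) = p.
Proof.
  unfold instS. rewrite fsubst_ren_ren by reflexivity.
  apply fsubst_id; [reflexivity|]. intros [|k]; reflexivity.
Qed.

Section Hilbert.

Variable T : form -> Prop.

Lemma prov_imp_refl p : Prov T (fimp p p).
Proof.
  eapply pr_MP; [eapply pr_MP; [apply (pr_S T p (fimp p p) p)|apply pr_K]|apply (pr_K T p p)].
Qed.

Inductive Deriv (G : list form) : form -> Prop :=
| der_hyp p : In p G -> Deriv G p
| der_prov p : Prov T p -> Deriv G p
| der_mp p q : Deriv G (fimp p q) -> Deriv G p -> Deriv G q.

Lemma deduction G a b : Deriv (a :: G) b -> Deriv G (fimp a b).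
Proof.
  induction 1 as [p [<-|Hp]|p Hp|p q _ IHpq _ IHp].
  - apply der_prov, prov_imp_refl.
  - eapply der_mp; [apply der_prov, pr_K|now apply der_hyp].
  - eapply der_mp; [apply der_prov, pr_K|now apply der_prov].
  - eapply der_mp; [eapply der_mp; [apply der_prov, (pr_S T a p q)|exact IHpq]|exact IHp].
Qed.

Lemma prov_of_deriv p : Deriv [] p -> Prov T p.
Proof. induction 1 as [p []|p|p q _ ? _ ?]; eauto using pr_MP. Qed.

Lemma der_hyp0 G a : Deriv (a :: G) a.
Proof. apply der_hyp; left; reflexivity. Qed.

Lemma der_weaken G a p : Deriv G p -> Deriv (a :: G) p.
Proof.
  induction 1; [apply der_hyp; right; assumption|apply der_prov; assumption|eapply der_mp; eauto].
Qed.

Lemma der_efq G p : Deriv G fbot -> Deriv G p.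
Proof.
  intros H. eapply der_mp; [apply der_prov, pr_DN|].
  eapply der_mp; [apply der_prov, (pr_K T fbot (fneg p))|exact H].
Qed.

Lemma der_and_intro G a b : Deriv G a -> Deriv G b -> Deriv G (fand a b).
Proof.
  intros Ha Hb. apply deduction.
  eapply der_mp; [eapply der_mp; [apply der_hyp0|apply der_weaken, Ha]|apply der_weaken, Hb].
Qed.

Lemma der_and_elim_l G a b : Deriv G (fand a b) -> Deriv G a.
Proof.
  intros H. eapply der_mp; [apply der_prov, pr_DN|]. apply deduction.
  eapply der_mp; [apply der_weaken, H|]. apply deduction, der_efq.
  eapply der_mp; [apply der_weaken, der_hyp0|apply der_hyp0].
Qed.

Lemma der_and_elim_r G a b : Deriv G (fand a b) -> Deriv G b.
Proof.
  intros H. eapply der_mp; [apply der_prov, pr_DN|]. apply deduction.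
  eapply der_mp; [apply der_weaken, H|]. apply deduction, der_weaken, der_hyp0.
Qed.

Lemma prov_imp_trans a b c : Prov T (fimp a b) -> Prov T (fimp b c) -> Prov T (fimp a c).
Proof.
  intros Hab Hbc. apply prov_of_deriv, deduction.
  eapply der_mp; [apply der_prov, Hbc|].
  eapply der_mp; [apply der_prov, Hab|apply der_hyp0].
Qed.

Lemma prov_iff_refl a : Prov T (fiff a a).
Proof. apply prov_of_deriv, der_and_intro; apply der_prov, prov_imp_refl. Qed.

Lemma prov_iff_sym a b : Prov T (fimp (fiff a b) (fiff b a)).
Proof.
  apply prov_of_deriv, deduction.
  apply der_and_intro; [eapply der_and_elim_r|eapply der_and_elim_l]; apply der_hyp0.
Qed.

Lemma prov_iff_trans a b c : Prov T (fimp (fiff a b) (fimp (fiff b c) (fiff a c))).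
Proof.
  apply prov_of_deriv, deduction, deduction.
  apply der_and_intro; apply deduction.
  - eapply der_mp; [eapply der_and_elim_l, der_weaken, der_hyp0|].
    eapply der_mp; [eapply der_and_elim_l, der_weaken, der_weaken, der_hyp0|apply der_hyp0].
  - eapply der_mp; [eapply der_and_elim_r, der_weaken, der_weaken, der_hyp0|].
    eapply der_mp; [eapply der_and_elim_r, der_weaken, der_hyp0|apply der_hyp0].
Qed.

Lemma prov_liftS_allS p : Prov T (fimp (liftS (fallS p)) p).
Proof.
  pose proof (pr_instS T (fsubst tvar (upS S) p) 0) as H.
  rewrite instS_0_lift in H. exact H.
Qed.

Lemma prov_allS_dist q c : Prov T (fimp (fallS (fimp q c)) (fimp (fallS q) (fallS c))).
Proof.
  eapply prov_imp_trans; [|apply (pr_qimpS T c (fallS q))].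
  eapply pr_MP; [apply (pr_qimpS T (fimp (liftS (fallS q)) c))|apply pr_genS].
  apply prov_of_deriv, deduction, deduction.
  eapply der_mp; [eapply der_mp; [apply der_prov, prov_liftS_allS|apply der_weaken, der_hyp0]|].
  eapply der_mp; [apply der_prov, prov_liftS_allS|apply der_hyp0].
Qed.

Lemma prov_allS_mono p q : Prov T (fimp p q) -> Prov T (fimp (fallS p) (fallS q)).
Proof. intros H. eapply pr_MP; [apply prov_allS_dist|apply pr_genS, H]. Qed.

Lemma prov_allS_mono2 p q c :
  Prov T (fimp p (fimp q c)) -> Prov T (fimp (fallS p) (fimp (fallS q) (fallS c))).
Proof. intros H. eapply prov_imp_trans; [apply prov_allS_mono, H|apply prov_allS_dist]. Qed.

End Hilbert.

Definition almost_incl (a b : nat) : form :=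
  fexN (fallN (fimp (flt v1 v0) (fimp (fmem v0 a) (fmem v0 b)))).

(* Equality modulo finite sets, phrased as [forall Z, X ⊆* Z <-> Y ⊆* Z] so that its
   being an equivalence relation is pure logic. *)
Definition eq_mod_finite : form := fallS (fiff (almost_incl 1 0) (almost_incl 2 0)).

Lemma eq_mod_finite_bound : fbound 0 2 eq_mod_finite.
Proof. cbn. repeat split; lia. Qed.

Lemma eq_mod_finite_equiv T : Prov T (is_equiv_rel eq_mod_finite).
Proof.
  apply prov_of_deriv, der_and_intro; [|apply der_and_intro]; apply der_prov.
  - apply pr_genS, pr_genS, prov_iff_refl.
  - apply pr_genS, pr_genS, prov_allS_mono, prov_iff_sym.
  - apply pr_genS, pr_genS, pr_genS, prov_allS_mono2, prov_iff_trans.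
Qed.

(** * Cohen forcing *)

Definition cond := list bool.

Definition extends (q p : cond) : Prop := exists t, q = p ++ t.

Lemma extends_refl p : extends p p.
Proof. exists []. now rewrite app_nil_r. Qed.

Lemma extends_trans a b c : extends a b -> extends b c -> extends a c.
Proof. intros [t1 ->] [t2 ->]. exists (t2 ++ t1). now rewrite app_assoc. Qed.

Lemma extends_app p t : extends (p ++ t) p.
Proof. now exists t. Qed.

Lemma extends_comparable s a b : extends s a -> extends s b -> extends a b \/ extends b a.
Proof.
  intros [t1 ->] [t2 H]. apply app_eq_app in H as (l & [[-> _]|[-> _]]).
  - left. apply extends_app.
  - right. apply extends_app.
Qed.

Lemma extends_length a b : extends a b -> a <> b -> length b < length a.
Proof.
  intros [[|x t] ->] Hne; [now rewrite app_nil_r in Hne|].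
  rewrite length_app. simpl. lia.
Qed.

Lemma nth_error_extends t s n : extends t s -> n < length s -> nth_error t n = nth_error s n.
Proof. intros [u ->] H. now apply nth_error_app1. Qed.

Lemma nth_agree_comparable (a b : cond) :
  (forall i x y, nth_error a i = Some x -> nth_error b i = Some y -> x = y) ->
  extends a b \/ extends b a.
Proof.
  revert b; induction a as [|x a IH]; intros [|y b] H.
  - left. apply extends_refl.
  - right. now exists (y :: b).
  - left. now exists (x :: a).
  - replace y with x by (apply (H 0); reflexivity).
    destruct (IH b) as [[t ->]|[t ->]]; [intros i; apply (H (S i))| |].
    + left. now exists t.
    + right. now exists t.
Qed.

Definition dense (p : cond) (P : cond -> Prop) : Prop :=
  forall q, extends q p -> exists r, extends r q /\ P r.

Lemma dense_mono p q P : dense p P -> extends q p -> dense q P.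
Proof. intros H Hq r Hr. apply H. eapply extends_trans; eauto. Qed.

Lemma dense_weaken p (P Q : cond -> Prop) :
  (forall r, extends r p -> P r -> Q r) -> dense p P -> dense p Q.
Proof.
  intros HPQ H q Hq. destruct (H q Hq) as (r & Hr & HP).
  exists r. split; [exact Hr|]. apply HPQ; [eapply extends_trans|]; eauto.
Qed.

Lemma dense_idem p P : dense p (fun r => dense r P) -> dense p P.
Proof.
  intros H q Hq. destruct (H q Hq) as (r & Hr & HP).
  destruct (HP r (extends_refl r)) as (s & Hs & Ps).
  exists s. split; [eapply extends_trans|]; eauto.
Qed.

Definition minimal (W : cond -> Prop) (r : cond) : Prop :=
  W r /\ forall r', W r' -> extends r r' -> r' = r.

Lemma minimal_below W r0 : W r0 -> exists r, minimal W r /\ extends r0 r.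
Proof.
  induction r0 as [r0 IH] using (well_founded_induction (well_founded_ltof _ (@length bool))).
  intros H0.
  destruct (classic (exists r', W r' /\ extends r0 r' /\ r' <> r0)) as [(r' & Hr' & Hext & Hne)|Hno].
  - destruct (IH r') as (r & Hmin & Hr); [apply extends_length; auto|exact Hr'|].
    exists r. split; [exact Hmin|eapply extends_trans; eauto].
  - exists r0. split; [split; [exact H0|]|apply extends_refl].
    intros r' Hr' Hext. apply NNPP. intros Hne. apply Hno. eauto.
Qed.

Lemma minimal_unique W r1 r2 s :
  minimal W r1 -> minimal W r2 -> extends s r1 -> extends s r2 -> r1 = r2.
Proof.
  intros [W1 M1] [W2 M2] H1 H2.
  destruct (extends_comparable s r1 r2 H1 H2) as [H|H].
  - symmetry. apply M1; assumption.
  - apply M2; assumption.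
Qed.
Definition name := nat -> cond -> Prop.

Definition no_name : name := fun _ _ => False.

Definition scons {A} (x : A) (f : nat -> A) (n : nat) : A :=
  match n with 0 => x | S k => f k end.

Fixpoint teval (rho : nat -> nat) (t : term) : nat :=
  match t with
  | tvar n => rho n
  | tzero => 0
  | tsucc u => S (teval rho u)
  | tadd u v => teval rho u + teval rho v
  | tmul u v => teval rho u * teval rho v
  end.

Fixpoint forces (rho : nat -> nat) (sig : nat -> name) (p : cond) (f : form) : Prop :=
  match f with
  | fbot => False
  | feq u v => teval rho u = teval rho v
  | flt u v => teval rho u < teval rho v
  | fmem u X => dense p (sig X (teval rho u))
  | fimp a b => forall q, extends q p -> forces rho sig q a -> forces rho sig q b
  | fallN a => forall n, forces (scons n rho) sig p a
  | fallS a => forall X, forces rho (scons X sig) p a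
  end.

Lemma forces_mono f : forall rho sig p q, forces rho sig p f -> extends q p -> forces rho sig q f.
Proof.
  induction f; simpl; intros rho sig p q H Hq; auto.
  - eapply dense_mono; eauto.
  - intros r Hr. apply H. eapply extends_trans; eauto.
  - intros n. eapply IHf; eauto.
  - intros X. eapply IHf; eauto.
Qed.

Lemma forces_dense f : forall rho sig p, dense p (fun r => forces rho sig r f) -> forces rho sig p f.
Proof.
  induction f; simpl; intros rho sig p H.
  1-3: destruct (H p (extends_refl p)) as (r & _ & Hr); exact Hr.
  - apply dense_idem, H.
  - intros q Hq Ha. apply IHf2. intros q' Hq'.
    destruct (H q' (extends_trans _ _ _ Hq' Hq)) as (r & Hr & Hab).
    exists r. split; [exact Hr|]. apply Hab; [apply extends_refl|].
    eapply forces_mono; [exact Ha|]. eapply extends_trans; eauto.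
  - intros n. apply IHf. eapply dense_weaken; [|exact H]. auto.
  - intros X. apply IHf. eapply dense_weaken; [|exact H]. auto.
Qed.

Lemma forces_and rho sig p a b :
  forces rho sig p (fand a b) <-> forces rho sig p a /\ forces rho sig p b.
Proof.
  simpl. split.
  - intros H. split; apply forces_dense; intros q Hq; apply NNPP; intros Hn;
      apply (H q Hq); intros r Hr Ha; [exfalso; apply Hn; eauto|].
    intros s Hs Hb. apply Hn. exists s. split; [eapply extends_trans|]; eauto.
  - intros [Ha Hb] q Hq H. apply (H q (extends_refl q) (forces_mono _ _ _ _ _ Ha Hq)
      q (extends_refl q) (forces_mono _ _ _ _ _ Hb Hq)).
Qed.

Lemma forces_iff rho sig p a b :
  forces rho sig p (fiff a b) <->
  (forall q, extends q p -> forces rho sig q a -> forces rho sig q b) /\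
  (forall q, extends q p -> forces rho sig q b -> forces rho sig q a).
Proof. unfold fiff. rewrite forces_and. reflexivity. Qed.

Lemma forces_exS rho sig p a :
  forces rho sig p (fexS a) <-> dense p (fun r => exists X, forces rho (scons X sig) r a).
Proof.
  simpl. split.
  - intros H q Hq. apply NNPP. intros Hn. apply (H q Hq). intros X r Hr Ha. apply Hn. eauto.
  - intros H q Hq Hall. destruct (H q Hq) as (r & Hr & X & HX). exact (Hall X r Hr HX).
Qed.

Lemma forces_exN rho sig p a :
  forces rho sig p (fexN a) <-> dense p (fun r => exists n, forces (scons n rho) sig r a).
Proof.
  simpl. split.
  - intros H q Hq. apply NNPP. intros Hn. apply (H q Hq). intros n r Hr Ha. apply Hn. eauto.
  - intros H q Hq Hall. destruct (H q Hq) as (r & Hr & n & Hn). exact (Hall n r Hr Hn).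
Qed.

Lemma teval_tsubst rho s t : teval rho (tsubst s t) = teval (fun k => teval rho (s k)) t.
Proof. induction t; simpl; auto. Qed.

Lemma forces_subst f : forall rho sig p s r,
  forces rho sig p (fsubst s r f) <-> forces (fun k => teval rho (s k)) (fun k => sig (r k)) p f.
Proof.
  induction f; intros rho sig p s r; simpl; rewrite ?teval_tsubst; try reflexivity.
  - split; intros H q Hq; specialize (H q Hq); rewrite IHf1, IHf2 in *; auto.
  - assert (E : forall n, (fun k => teval (scons n rho) (upN s k)) = scons n (fun k => teval rho (s k))).
    { intros n. apply functional_extensionality. intros [|k]; simpl; [reflexivity|].
      now rewrite teval_tsubst. }
    split; intros H n; specialize (H n); rewrite IHf, E in *; auto.
  - assert (E : forall X, (fun k => scons X sig (upS r k)) = scons X (fun k => sig (r k))).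
    { intros X. apply functional_extensionality. intros [|k]; reflexivity. }
    split; intros H X; specialize (H X); rewrite IHf, E in *; auto.
Qed.

Lemma forces_ext rho rho' sig sig' p f : (forall k, rho k = rho' k) -> (forall k, sig k = sig' k) ->
  forces rho sig p f -> forces rho' sig' p f.
Proof. intros H1 H2. apply functional_extensionality in H1, H2. now subst. Qed.

Lemma teval_bound n t rho rho' :
  tbound n t -> (forall k, k < n -> rho k = rho' k) -> teval rho t = teval rho' t.
Proof. induction t; simpl; intuition; f_equal; auto. Qed.

Lemma forces_bound f : forall n m rho rho' sig sig' p, fbound n m f ->
  (forall k, k < n -> rho k = rho' k) -> (forall k, k < m -> sig k = sig' k) ->
  (forces rho sig p f <-> forces rho' sig' p f).
Proof.
  induction f; intros n' m' rho rho' sig sig' p Hb Hr Hs; simpl in *.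
  - reflexivity.
  - destruct Hb. now rewrite (teval_bound n' t rho rho'), (teval_bound n' t0 rho rho').
  - destruct Hb. now rewrite (teval_bound n' t rho rho'), (teval_bound n' t0 rho rho').
  - destruct Hb. now rewrite (teval_bound n' t rho rho'), Hs.
  - destruct Hb as [Hb1 Hb2]. split; intros H q Hq; specialize (H q Hq);
      rewrite (IHf1 n' m' rho rho' sig sig'), (IHf2 n' m' rho rho' sig sig') in *; auto.
  - split; intros H k; specialize (H k);
      rewrite (IHf (S n') m' (scons k rho) (scons k rho') sig sig') in *; auto;
      intros [|j] Hj; simpl; auto; apply Hr; lia.
  - split; intros H X; specialize (H X);
      rewrite (IHf n' (S m') rho rho' (scons X sig) (scons X sig')) in *; auto;
      intros [|j] Hj; simpl; auto; apply Hs; lia.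
Qed.

(** * Soundness *)

Lemma tpair_inj a b c d : (a + b) * (a + b) + a = (c + d) * (c + d) + c -> a = c /\ b = d.
Proof.
  intros H. destruct (lt_eq_lt_dec (a + b) (c + d)) as [[Hlt|Heq]|Hlt].
  - exfalso. assert ((a + b + 1) * (a + b + 1) <= (c + d) * (c + d)) by (apply Nat.mul_le_mono; lia).
    nia.
  - assert (a = c) by nia. lia.
  - exfalso. assert ((c + d + 1) * (c + d + 1) <= (a + b) * (a + b)) by (apply Nat.mul_le_mono; lia).
    nia.
Qed.

(* Witnesses chosen at minimal conditions are pairwise incompatible, so they glue. *)
Lemma forcing_choice rho sig phi : exists Y : name, forall n r,
  (exists X, forces (scons n rho) (scons X sig) r phi) ->
  exists X, forces (scons n rho) (scons X sig) r phi /\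
    forall m s, extends s r -> (X m s <-> Y ((n + m) * (n + m) + n) s).
Proof.
  set (W n r := exists X, forces (scons n rho) (scons X sig) r phi).
  set (wit n r := epsilon (inhabits no_name) (fun X => forces (scons n rho) (scons X sig) r phi)).
  exists (fun k s => exists n m r,
    k = (n + m) * (n + m) + n /\ minimal (W n) r /\ extends s r /\ wit n r m s).
  intros n r0 H0. destruct (minimal_below (W n) r0 H0) as (r & Hmin & Hr0).
  exists (wit n r). split.
  - apply (forces_mono _ _ _ r); [apply epsilon_spec, (proj1 Hmin)|exact Hr0].
  - intros m s Hs. assert (Hsr : extends s r) by (eapply extends_trans; eauto). split.
    + intros Hw. exists n, m, r. auto.
    + intros (n' & m' & r' & Heq & Hmin' & Hsr' & Hw). apply tpair_inj in Heq as [<- <-].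
      now rewrite (minimal_unique (W n) r r' s).
Qed.

Lemma forces_ac rho sig p phi :
  forces rho sig p (fimp (fallN (fexS phi))
    (fexS (fallN (fexS
       (fand (fallN (fiff (fmem v0 0) (fmem (tpair v1 v0) 1)))
             (fsubst tvar (fun k => match k with 0 => 0 | S j => S (S j) end) phi)))))).
Proof.
  cbn [forces]. intros q _ H. destruct (forcing_choice rho sig phi) as [Y HY].
  rewrite forces_exS. intros q' Hq'. exists q'. split; [apply extends_refl|]. exists Y.
  intros n. rewrite forces_exS. intros q1 Hq1.
  pose proof (proj1 (forces_exS _ _ _ _) (H n)) as Hn.
  destruct (Hn q1 (extends_trans _ _ _ Hq1 Hq')) as (r & Hr & Hwit).
  destruct (HY n r Hwit) as (X & HX & HXY).
  exists r. split; [exact Hr|]. exists X. rewrite forces_and. split.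
  - intros m. rewrite forces_iff. cbn [forces teval scons tpair v0 v1].
    split; intros t Ht; apply dense_weaken; intros s Hs;
      apply HXY; eapply extends_trans; eauto.
  - rewrite forces_subst. eapply forces_ext; [| |exact HX]; intros [|k]; reflexivity.
Qed.

Lemma forces_axiom f : SOA f -> forall rho sig p, forces rho sig p f.
Proof.
  destruct 1 as [| | | | | | | | |phi|phi]; intros rho sig p.
  - cbn. intros n q _ H. discriminate.
  - cbn. intros m n q _ H. congruence.
  - cbn. intros n. lia.
  - cbn. intros m n. lia.
  - cbn. intros n. lia.
  - cbn. intros m n. lia.
  - cbn. intros n q _ H. lia.
  - cbn [forces]. intros m n. rewrite forces_iff. unfold for_, fneg. cbn [forces teval scons v0 v1].
    split.
    + intros q _ H r _ Hn. assert (~ m < n) by (intro; eapply Hn; [apply extends_refl|eauto]).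
      lia.
    + intros q _ H. destruct (Nat.lt_ge_cases m n); [lia|].
      enough (m = n) by lia. apply (H q (extends_refl q)). intros r _ Hr. lia.
  - cbn [forces]. intros X q _ H. rewrite forces_and in H. destruct H as [H0 HS].
    cbn [forces teval scons v0] in *. intros n. induction n as [|n IH].
    + exact H0.
    + exact (HS n q (extends_refl q) IH).
  - rewrite forces_exS. intros q _. exists q. split; [apply extends_refl|].
    exists (fun n r => forces (scons n rho) sig r phi).
    intros n. rewrite forces_iff. cbn [forces teval scons v0]. unfold liftS.
    split; intros r _ H; rewrite forces_subst in *.
    + eapply forces_ext; [| |apply forces_dense, H]; reflexivity.
    + intros r' Hr'. exists r'. split; [apply extends_refl|].
      eapply forces_mono; [|exact Hr']. eapply forces_ext; [| |exact H]; reflexivity.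
  - apply forces_ac.
Qed.

Theorem forces_sound f : Prov SOA f -> forall rho sig p, forces rho sig p f.
Proof.
  induction 1; intros rho sig p0.
  - apply forces_axiom; assumption.
  - cbn. intros w _ Hp w2 Hw2 _. eapply forces_mono; eauto.
  - cbn. intros w _ H1 w1 Hw1 H2 w3 Hw3 Ha.
    apply (H1 w3 (extends_trans _ _ _ Hw3 Hw1) Ha w3 (extends_refl _) (H2 w3 Hw3 Ha)).
  - cbn. intros w _ H. apply forces_dense. intros w2 Hw2. apply NNPP. intros Hn.
    apply (H w2 Hw2). intros s Hs Hp. apply Hn. exists s; auto.
  - apply (IHProv1 rho sig p0 p0 (extends_refl _) (IHProv2 rho sig p0)).
  - cbn [forces]. intros w _ H. unfold instN. rewrite forces_subst.
    eapply forces_ext; [| |exact (H (teval rho t))]; intros [|k]; reflexivity.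
  - cbn [forces]. intros w _ H w2 Hw2 Hw n. apply (H n w2 Hw2). unfold liftN.
    rewrite forces_subst. eapply forces_ext; [| |exact Hw]; reflexivity.
  - intros n. apply IHProv.
  - cbn [forces]. intros w _ H. unfold instS. rewrite forces_subst.
    eapply forces_ext; [| |exact (H (sig Y))]; intros [|k]; reflexivity.
  - cbn [forces]. intros w _ H w2 Hw2 Hw X. apply (H X w2 Hw2). unfold liftS.
    rewrite forces_subst. eapply forces_ext; [| |exact Hw]; reflexivity.
  - intros X. apply IHProv.
  - reflexivity.
  - cbn [forces]. intros w _ He w2 _ H. unfold instN in *. rewrite forces_subst in *.
    eapply forces_ext; [| |exact H]; intros [|k]; simpl; auto.
Qed.

(** * Automorphisms and equality of names *)

Fixpoint flip (f : nat -> bool) (s : cond) : cond :=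
  match s with
  | [] => []
  | b :: s' => xorb (f 0) b :: flip (fun i => f (S i)) s'
  end.

Lemma flip_nth f s m : nth_error (flip f s) m = option_map (xorb (f m)) (nth_error s m).
Proof. revert f m; induction s; intros f [|m]; simpl; auto. apply (IHs (fun i => f (S i))). Qed.

Lemma flip_involutive f s : flip f (flip f s) = s.
Proof. revert f; induction s; intros f; simpl; auto. rewrite IHs. now destruct (f 0), a. Qed.

Lemma flip_app f p t : flip f (p ++ t) = flip f p ++ flip (fun i => f (length p + i)) t.
Proof. revert f; induction p; intros f; simpl; auto. now rewrite IHp. Qed.

Lemma extends_flip f q p : extends q p -> extends (flip f q) (flip f p).
Proof. intros [t ->]. rewrite flip_app. apply extends_app. Qed.

Lemma extends_flip_iff f q p : extends (flip f q) p <-> extends q (flip f p).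
Proof.
  split; intros H.
  - rewrite <- (flip_involutive f q). now apply extends_flip.
  - rewrite <- (flip_involutive f p). now apply extends_flip.
Qed.

Lemma dense_flip f p P : dense p P -> dense (flip f p) (fun r => P (flip f r)).
Proof.
  intros H q Hq. apply extends_flip_iff in Hq. destruct (H _ Hq) as (r & Hr & HP).
  exists (flip f r). split; [now apply extends_flip_iff|now rewrite flip_involutive].
Qed.

Definition name_flip (f : nat -> bool) (X : name) : name := fun m s => X m (flip f s).

Lemma name_flip_involutive f X : name_flip f (name_flip f X) = X.
Proof.
  unfold name_flip. apply functional_extensionality; intros m.
  apply functional_extensionality; intros s. now rewrite flip_involutive.
Qed.

Lemma dense_name_flip f p m X : dense p (X m) <-> dense (flip f p) (name_flip f X m).
Proof.
  split; [apply dense_flip|]. intros H. apply (dense_flip f) in H.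
  rewrite flip_involutive in H. eapply dense_weaken; [|exact H].
  intros r _. unfold name_flip. now rewrite flip_involutive.
Qed.

Lemma forces_flip f phi : forall rho sig sig' p, (forall k, sig' k = name_flip f (sig k)) ->
  (forces rho sig p phi <-> forces rho sig' (flip f p) phi).
Proof.
  induction phi; intros rho sig sig' p Hs; simpl; try reflexivity.
  - rewrite Hs. apply dense_name_flip.
  - split; intros H q Hq Ha.
    + rewrite <- (flip_involutive f q) in Ha |- *.
      rewrite <- (IHphi2 rho sig sig') by exact Hs.
      apply H; [now apply extends_flip_iff|]. now rewrite (IHphi1 rho sig sig').
    + rewrite (IHphi2 rho sig sig') by exact Hs.
      apply H; [now apply extends_flip|]. now rewrite <- (IHphi1 rho sig sig').
  - split; intros H n; apply (IHphi _ sig sig' p Hs), H.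
  - split; intros H X.
    + rewrite <- (IHphi rho (scons (name_flip f X) sig)); [apply H|].
      intros [|k]; simpl; [now rewrite name_flip_involutive|apply Hs].
    + rewrite (IHphi rho (scons X sig) (scons (name_flip f X) sig')); [apply H|].
      intros [|k]; simpl; [reflexivity|apply Hs].
Qed.

Lemma flip_to_comparable p q : exists f, (forall i, length p <= i -> f i = false) /\
  (extends (flip f p) q \/ extends q (flip f p)).
Proof.
  exists (fun i => match nth_error p i, nth_error q i with
                   | Some a, Some b => xorb a b
                   | _, _ => false
                   end).
  split.
  - intros i Hi. now rewrite (proj2 (nth_error_None p i) Hi).
  - apply nth_agree_comparable. intros i a b Ha Hb.
    rewrite flip_nth, Hb in Ha. destruct (nth_error p i) as [c|]; [|discriminate].
    injection Ha as <-. now destruct c, b.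
Qed.

Definition name_eq (p : cond) (X Y : name) : Prop :=
  forall m q, extends q p -> (dense q (X m) <-> dense q (Y m)).

Lemma name_eq_refl p X : name_eq p X X.
Proof. intros m q _. reflexivity. Qed.

Lemma name_eq_sym p X Y : name_eq p X Y -> name_eq p Y X.
Proof. intros H m q Hq. symmetry. now apply H. Qed.

Lemma name_eq_trans p X Y Z : name_eq p X Y -> name_eq p Y Z -> name_eq p X Z.
Proof. intros H1 H2 m q Hq. rewrite (H1 m q Hq). now apply H2. Qed.

Lemma name_eq_mono p q X Y : name_eq p X Y -> extends q p -> name_eq q X Y.
Proof. intros H Hq m r Hr. apply H. eapply extends_trans; eauto. Qed.

Lemma name_eq_dense p X Y : dense p (fun r => name_eq r X Y) -> name_eq p X Y.
Proof.
  assert (Hdir : forall X Y, dense p (fun r => name_eq r X Y) -> forall m q, extends q p ->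
            dense q (X m) -> dense q (Y m)).
  { intros X' Y' H m q Hq HX. apply dense_idem.
    eapply dense_weaken; [|exact (dense_mono _ _ _ H Hq)].
    intros r Hr Heq. apply (Heq m r (extends_refl r)). eapply dense_mono; eauto. }
  intros H m q Hq. split; apply Hdir; auto.
  eapply dense_weaken; [|exact H]. intros r _. apply name_eq_sym.
Qed.

Lemma forces_name_eq phi : forall rho sig sig' p, (forall k, name_eq p (sig k) (sig' k)) ->
  (forces rho sig p phi <-> forces rho sig' p phi).
Proof.
  induction phi; intros rho sig sig' p Hs; simpl; try reflexivity.
  - apply Hs, extends_refl.
  - assert (Hq : forall q, extends q p -> forall k, name_eq q (sig k) (sig' k))
      by (intros q Hq k; eapply name_eq_mono; eauto).
    split; intros H q Hq' Ha.
    + apply (IHphi2 rho sig sig' q (Hq q Hq')), H; [exact Hq'|].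
      apply (IHphi1 rho sig sig' q (Hq q Hq')), Ha.
    + apply (IHphi2 rho sig sig' q (Hq q Hq')), H; [exact Hq'|].
      apply (IHphi1 rho sig sig' q (Hq q Hq')), Ha.
  - split; intros H n; apply (IHphi _ sig sig' p Hs), H.
  - assert (HX : forall X k, name_eq p (scons X sig k) (scons X sig' k))
      by (intros X [|k]; [apply name_eq_refl|apply Hs]).
    split; intros H X; apply (IHphi rho _ _ p (HX X)), H.
Qed.

Lemma forces_seteq rho sig p a b : forces rho sig p (seteq a b) <-> name_eq p (sig a) (sig b).
Proof.
  unfold seteq, name_eq. cbn [forces]. split.
  - intros H m q Hq. specialize (H m). apply forces_iff in H as [H1 H2].
    split; [apply H1|apply H2]; assumption.
  - intros H m. apply forces_iff. split; intros q Hq; apply H, Hq.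
Qed.

(** * The Cohen real and equality modulo finite sets *)

Definition forces2 (phi : form) (p : cond) (x y : name) : Prop :=
  forces (fun _ => 0) (scons x (scons y (fun _ => no_name))) p phi.

Lemma forces2_mono phi p q x y : forces2 phi p x y -> extends q p -> forces2 phi q x y.
Proof. apply forces_mono. Qed.

Lemma forces2_flip f phi p x y :
  forces2 phi p x y -> forces2 phi (flip f p) (name_flip f x) (name_flip f y).
Proof. apply forces_flip. intros [|[|k]]; reflexivity. Qed.

Lemma forces_app2 phi a b rho sig p : fbound 0 2 phi ->
  (forces rho sig p (app2 phi a b) <-> forces2 phi p (sig a) (sig b)).
Proof.
  intros Hb. unfold app2, forces2. rewrite forces_subst.
  apply (forces_bound _ 0 2); [exact Hb|lia|]. intros [|[|k]] Hk; [reflexivity|reflexivity|lia].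
Qed.

Definition almost_incl_at (p : cond) (X Y : name) : Prop :=
  dense p (fun r => exists N, forall n s, N < n -> extends s r -> dense s (X n) -> dense s (Y n)).

Lemma forces_almost_incl rho sig p a b :
  forces rho sig p (almost_incl a b) <-> almost_incl_at p (sig a) (sig b).
Proof.
  unfold almost_incl. rewrite forces_exN. cbn [forces teval scons v0 v1].
  split; apply dense_weaken; intros r _ [N HN]; exists N.
  - intros n s Hn Hs. exact (HN n s Hs Hn s (extends_refl s)).
  - intros n q Hq Hn s Hs. apply HN; [exact Hn|eapply extends_trans; eauto].
Qed.

Lemma forces_eq_mod_finite p X Y : forces2 eq_mod_finite p X Y <->
  forall Z q, extends q p -> (almost_incl_at q X Z <-> almost_incl_at q Y Z).
Proof.
  unfold forces2, eq_mod_finite. cbn [forces].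
  setoid_rewrite forces_iff. setoid_rewrite forces_almost_incl. cbn [scons].
  split; intros H Z.
  - intros q Hq. split; apply H, Hq.
  - split; intros q Hq; apply (H Z q Hq).
Qed.
Lemma almost_incl_at_tail K p X Y Z : (forall m, K <= m -> forall s, Y m s -> X m s) ->
  almost_incl_at p X Z -> almost_incl_at p Y Z.
Proof.
  intros HYX. apply dense_weaken. intros r _ [N HN]. exists (N + K).
  intros n s Hn Hs HY. apply (HN n s); [lia|exact Hs|].
  eapply dense_weaken; [|exact HY]. intros t _. apply HYX. lia.
Qed.

Lemma eq_mod_finite_of_tail K X Y : (forall m, K <= m -> forall s, X m s <-> Y m s) ->
  forall p, forces2 eq_mod_finite p X Y.
Proof.
  intros HXY p. apply forces_eq_mod_finite. intros Z q _.
  split; apply (almost_incl_at_tail K); intros m Hm s; apply HXY, Hm.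
Qed.

Definition cohen : name := fun m s => nth_error s m = Some true.

Definition cohen_bar : name := name_flip (fun _ => true) cohen.

Lemma eq_mod_finite_flip_cohen f K : (forall i, K <= i -> f i = false) ->
  forall p, forces2 eq_mod_finite p (name_flip f cohen) cohen.
Proof.
  intros Hf. apply (eq_mod_finite_of_tail K). intros m Hm s.
  unfold name_flip, cohen. rewrite flip_nth, Hf by exact Hm.
  destruct (nth_error s m); reflexivity.
Qed.

Lemma not_eq_mod_finite_cohen_bar : ~ forces2 eq_mod_finite [] cohen cohen_bar.
Proof.
  rewrite forces_eq_mod_finite. intros H.
  assert (Hcc : almost_incl_at [] cohen cohen).
  { intros q _. exists q. split; [apply extends_refl|]. exists 0. auto. }
  destruct (proj1 (H cohen [] (extends_refl _)) Hcc [] (extends_refl _)) as (r & _ & N & HN).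
  set (n := S (N + length r)). set (s := r ++ repeat false (S (S N))).
  assert (Hn : n < length s) by (unfold s; rewrite length_app, repeat_length; lia).
  assert (Hsn : nth_error s n = Some false).
  { unfold s. rewrite nth_error_app2 by lia. apply nth_error_repeat. lia. }
  assert (Hbar : dense s (cohen_bar n)).
  { intros q Hq. exists q. split; [apply extends_refl|].
    unfold cohen_bar, name_flip, cohen. rewrite flip_nth, (nth_error_extends q s n Hq Hn), Hsn.
    reflexivity. }
  destruct (HN n s ltac:(lia) (extends_app r _) Hbar s (extends_refl s)) as (t & Ht & Hc).
  unfold cohen in Hc. rewrite (nth_error_extends t s n Ht Hn), Hsn in Hc. discriminate.
Qed.

(** * No definable classifier *)

Section No_classifier.

Variable F : form.
Hypothesis F_bound : fbound 0 2 F.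
Hypothesis F_function : Prov SOA (is_function F).
Hypothesis F_classifies : Prov SOA (classifies eq_mod_finite F).

Lemma value_dense x p : dense p (fun r => exists z, forces2 F r x z /\
  forall w r', extends r' r -> forces2 F r' x w -> name_eq r' w z).
Proof.
  pose proof (forces_sound _ F_function (fun _ => 0) (fun _ => no_name) p x) as H.
  rewrite forces_exS in H. eapply dense_weaken; [|exact H]. intros r _ [z Hz].
  rewrite forces_and, forces_app2 in Hz by exact F_bound. destruct Hz as [Hxz Huniq].
  exists z. split; [exact Hxz|]. intros w r' Hr' Hw.
  cbn [forces] in Huniq. specialize (Huniq w r' Hr'). rewrite forces_app2, forces_seteq in Huniq by exact F_bound.
  exact (Huniq Hw).
Qed.

Lemma value_exists x p : exists r z, extends r p /\ forces2 F r x z.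
Proof.
  destruct (value_dense x p p (extends_refl p)) as (r & Hr & z & Hz & _). eauto.
Qed.

Lemma value_unique x r z1 z2 : forces2 F r x z1 -> forces2 F r x z2 -> name_eq r z1 z2.
Proof.
  intros H1 H2. apply name_eq_dense. eapply dense_weaken; [|apply (value_dense x r)].
  intros r' Hr' (z & _ & Hu).
  apply (name_eq_trans _ _ z); [|apply name_eq_sym]; apply Hu;
    solve [apply extends_refl|eapply forces2_mono; eauto].
Qed.

Lemma classified x y p : forces2 eq_mod_finite p x y <->
  dense p (fun r => exists z, forces2 F r x z /\ forces2 F r y z).
Proof.
  pose proof (forces_sound _ F_classifies (fun _ => 0) (fun _ => no_name) p x y) as H.
  cbn [forces] in H. apply forces_iff in H as [H1 H2].
  specialize (H1 p (extends_refl p)). specialize (H2 p (extends_refl p)).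
  rewrite forces_app2, forces_exS in H1, H2 by exact eq_mod_finite_bound.
  assert (Hz : forall r z sig, forces (fun _ => 0) (scons z (scons y (scons x sig))) r
                 (fand (app2 F 2 0) (app2 F 1 0)) <-> forces2 F r x z /\ forces2 F r y z).
  { intros r z sig. rewrite forces_and, !forces_app2 by exact F_bound. reflexivity. }
  split.
  - intros Hxy. eapply dense_weaken; [|exact (H1 Hxy)].
    intros r _ [z Hxz]. exists z. now apply Hz in Hxz.
  - intros Hd. apply H2. eapply dense_weaken; [|exact Hd].
    intros r _ [z Hxz]. exists z. now apply Hz.
Qed.

Definition forces_in_value (m : nat) (x : name) (p : cond) : Prop :=
  dense p (fun r => exists z, forces2 F r x z /\ dense r (z m)).

Lemma value_mem_iff x z r t m : forces2 F r x z -> extends t r ->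
  (dense t (z m) <-> forces_in_value m x t).
Proof.
  intros Hz Ht. split.
  - intros Hm q Hq. exists q. split; [apply extends_refl|]. exists z. split.
    + eapply forces2_mono; [exact Hz|]. eapply extends_trans; eauto.
    + eapply dense_mono; eauto.
  - intros Hv. apply dense_idem. eapply dense_weaken; [|exact Hv].
    intros r' Hr' (z' & Hz' & Hm).
    assert (Hr'r : extends r' r) by (eapply extends_trans; eauto).
    apply (value_unique x r' z' z Hz' (forces2_mono _ _ _ _ _ Hz Hr'r) m r' (extends_refl r')).
    exact Hm.
Qed.

Lemma forces_in_value_invariant x y m p : (forall q, forces2 eq_mod_finite q x y) ->
  forces_in_value m x p -> forces_in_value m y p.
Proof.
  intros Hxy Hx. apply dense_idem. eapply dense_weaken; [|exact Hx].
  intros r _ (z & Hz & Hm). eapply dense_weaken; [|exact (proj1 (classified x y r) (Hxy r))].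
  intros r' Hr' (z' & Hxz' & Hyz'). exists z'. split; [exact Hyz'|].
  apply (value_unique x r' z z' (forces2_mono _ _ _ _ _ Hz Hr') Hxz' m r' (extends_refl r')).
  eapply dense_mono; eauto.
Qed.

Lemma forces_in_value_flip f m x p :
  forces_in_value m x p -> forces_in_value m (name_flip f x) (flip f p).
Proof.
  intros H. apply (dense_flip f) in H. eapply dense_weaken; [|exact H].
  intros r _ (z & Hz & Hm). exists (name_flip f z).
  rewrite <- (flip_involutive f r). split.
  - apply forces2_flip, Hz.
  - apply dense_name_flip, Hm.
Qed.

Lemma forces_in_value_cohen_homogeneous m p q :
  forces_in_value m cohen p -> forces_in_value m cohen q.
Proof.
  intros Hp. apply dense_idem. intros q' _.
  (* Flip the bits where p and q' disagree: this changes cohen only finitely. *)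
  destruct (flip_to_comparable p q') as (f & Hf & Hcmp).
  assert (Hfp : forces_in_value m cohen (flip f p)).
  { apply (forces_in_value_invariant (name_flip f cohen)).
    - exact (eq_mod_finite_flip_cohen f (length p) Hf).
    - apply forces_in_value_flip, Hp. }
  destruct Hcmp as [Hc|Hc].
  - exists (flip f p). split; [exact Hc|]. exact Hfp.
  - exists q'. split; [apply extends_refl|]. eapply dense_mono; eauto.
Qed.

Lemma forces_in_value_cohen_bar m p : forces_in_value m cohen p <-> forces_in_value m cohen_bar p.
Proof.
  split; intros H.
  - rewrite <- (flip_involutive (fun _ => true) p). apply forces_in_value_flip.
    exact (forces_in_value_cohen_homogeneous m p _ H).
  - apply (forces_in_value_flip (fun _ => true)) in H.
    unfold cohen_bar in H. rewrite name_flip_involutive in H.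
    exact (forces_in_value_cohen_homogeneous m _ p H).
Qed.

Lemma no_classifier : False.
Proof.
  apply not_eq_mod_finite_cohen_bar, classified. intros q _.
  destruct (value_exists cohen q) as (r & z & Hr & Hz).
  destruct (value_exists cohen_bar r) as (s & z' & Hs & Hz').
  assert (Hzz : name_eq s z' z).
  { intros m t Ht. rewrite (value_mem_iff cohen_bar z' s t m Hz' Ht).
    rewrite (value_mem_iff cohen z r t m Hz (extends_trans _ _ _ Ht Hs)).
    symmetry. apply forces_in_value_cohen_bar. }
  exists s. split; [eapply extends_trans; eauto|]. exists z. split.
  - eapply forces2_mono; eauto.
  - apply (forces_name_eq F _ (scons cohen_bar (scons z' (fun _ => no_name)))); [|exact Hz'].
    intros [|[|k]]; [apply name_eq_refl|exact Hzz|apply name_eq_refl].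
Qed.

End No_classifier.

Theorem theorem2p2 : ~ eliminates_imaginaries SOA.
Proof.
  intros Helim.
  destruct (Helim eq_mod_finite eq_mod_finite_bound (eq_mod_finite_equiv SOA))
    as (F & HF & Hfun & Hcls).
  exact (no_classifier F HF Hfun Hcls).
Qed.
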